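(* Let $n\ge 1$ and let $T_n$ be the $n\times n$ tridiagonal matrix with diagonal entries $(T_n)_{ii}=1$ for $1\le i\le n$, superdiagonal entries $(T_n)_{i,i+1}=i$ and subdiagonal entries $(T_n)_{i+1,i}=n-i$ for $1\le i\le n-1$, and all other entries $0$. Then $$\det(T_n)=\begin{cases}0 & \text{if } n \text{ is even},\\[4pt] \dfrac{(-1)^{\frac{n-1}{2}}\, n!}{2^{n-1}}\dbinom{n-1}{\frac{n-1}{2}} & \text{if } n \text{ is odd}.\end{cases}$$ *)

From mathcomp Require Import all_boot all_order all_algebra.
Set Implicit Arguments. Unset Strict Implicit. Unset Printing Implicit Defensive.
Import GRing.Theory Num.Theory.
Local Open Scope ring_scope.

(* T_n with 0-based indices: entry (i,j) for i,j : 'I_n.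
   Paper (1-based): T_{ii}=1, T_{i,i+1}=i, T_{i+1,i}=n-i.
   0-based with i = i0+1: T(i0,i0)=1, T(i0,i0+1)=i0+1, T(i0+1,i0)=n-(i0+1). *)
Definition Tmat (n : nat) : 'M[rat]_n :=
  \matrix_(i < n, j < n)
    (if i == j :> nat then 1
     else if j == i.+1 :> nat then (i.+1)%:R
     else if i == j.+1 :> nat then (n - j.+1)%:R
     else 0).

From mathcomp Require Import all_boot all_order all_algebra zify ring.
Set Implicit Arguments. Unset Strict Implicit. Unset Printing Implicit Defensive.
Import GRing.Theory Num.Theory.
Local Open Scope ring_scope.

(* Let D_k be the k-th leading principal minor of T_n.  Since
   T_n is tridiagonal, Laplace expansion along the last row gives the
   continuant recurrence  D_{k+2} = D_{k+1} - (k+1)(n-k-1) D_k.  Solving it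
   two steps at a time shows, by induction on j,
     D_{2j+1} = (2j+1) D_{2j}   and   D_{2j+2} = (2j+2-n) D_{2j+1},
   so D_{2i} = prod_{l<i} (2l+2-n)(2l+1).  For n even the factor with
   2l+2 = n vanishes, so det T_n = D_n = 0.  For n = 2m+1 the factors
   2l+2-n = -(2(m-1-l)+1) pair up with the odd numbers, giving
   det T_n = (2m+1) (-1)^m (1*3*...*(2m-1))^2, and the double factorial
   identity (1*3*...*(2m-1)) 2^m m! = (2m)! turns this into the stated
   binomial expression. *)

Definition leading_mx (R : pzRingType) (f : nat -> nat -> R) (k : nat) : 'M[R]_k :=
  \matrix_(i < k, j < k) f i j.

Section Continuant.
Variables (R : comPzRingType) (f : nat -> nat -> R).
Hypothesis tridiag : forall i j : nat, (i.+1 < j)%N || (j.+1 < i)%N -> f i j = 0.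

(* Continuant recurrence: expanding a tridiagonal determinant along its last
   row, then the off-diagonal cofactor along its last column. *)
Lemma det_tridiag_rec k :
  \det (leading_mx f k.+2) =
  f k.+1 k.+1 * \det (leading_mx f k.+1)
  - f k k.+1 * f k.+1 k * \det (leading_mx f k).
Proof.
rewrite (expand_det_row _ ord_max) big_ord_recr /= big_ord_recr /=.
rewrite big1 ?add0r; last first.
  by move=> j _; rewrite mxE tridiag ?mul0r //= ltnS ltn_ord orbT.
rewrite !mxE /= addrC; congr (_ + _).
  rewrite /cofactor addnn -signr_odd odd_double expr0 mul1r; congr (_ * \det _).
  by apply/matrixP => a b; rewrite !mxE !lift_max.
rewrite /cofactor -signr_odd /= addnn odd_double /= expr1.
rewrite (expand_det_col _ ord_max) big_ord_recr /= big1 ?add0r; last first.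
  move=> i _; rewrite !mxE tridiag ?mul0r //=.
  by rewrite /bump; have := ltn_ord i; case: leqP; case: leqP; lia.
rewrite !mxE /cofactor addnn -signr_odd odd_double expr0 mul1r lift_max /= /bump leqnn /=.
have minor_k : row' ord_max (col' ord_max (row' ord_max
    (col' (widen_ord (leqnSn k.+1) ord_max) (leading_mx f k.+2)))) = leading_mx f k.
  apply/matrixP => a b; rewrite !mxE !lift_max /= /bump /=.
  by rewrite (leqNgt k b) ltn_ord /= add0n (leqNgt k b) ltn_ord.
by rewrite minor_k add1n mulN1r mulrN mulrA [f k.+1 k * _]mulrC.
Qed.

End Continuant.

Definition Tentry (n i j : nat) : rat :=
  if i == j then 1
  else if j == i.+1 then (i.+1)%:R
  else if i == j.+1 then (n - j.+1)%:R
  else 0.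

Lemma Tentry_tridiag n (i j : nat) :
  (i.+1 < j)%N || (j.+1 < i)%N -> Tentry n i j = 0.
Proof.
rewrite /Tentry => far.
have -> : (i == j) = false by apply/eqP; lia.
have -> : (j == i.+1) = false by apply/eqP; lia.
by have -> : (i == j.+1) = false by apply/eqP; lia.
Qed.

Lemma Tmat_leading n : Tmat n = leading_mx (Tentry n) n.
Proof. by apply/matrixP => i j; rewrite !mxE. Qed.

Definition minorT (n k : nat) : rat := \det (leading_mx (Tentry n) k).

Lemma minorT0 n : minorT n 0 = 1.
Proof. by rewrite /minorT det_mx00. Qed.

Lemma minorT1 n : minorT n 1 = 1.
Proof.
rewrite /minorT (expand_det_row _ ord0) big_ord1 !mxE /cofactor /Tentry /=.
by rewrite det_mx00 mul1r mulr1.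
Qed.

Lemma minorT_rec n k :
  minorT n k.+2 = minorT n k.+1 - (k.+1 * (n - k.+1))%:R * minorT n k.
Proof.
rewrite /minorT det_tridiag_rec; last exact: Tentry_tridiag.
have -> : Tentry n k.+1 k.+1 = 1 by rewrite /Tentry eqxx.
have -> : Tentry n k k.+1 = k.+1%:R.
  by rewrite /Tentry eqxx; have -> : (k == k.+1) = false by apply/eqP; lia.
have -> : Tentry n k.+1 k = (n - k.+1)%:R.
  rewrite /Tentry eqxx; have -> : (k.+1 == k) = false by apply/eqP; lia.
  by have -> : (k == k.+2) = false by apply/eqP; lia.
by rewrite mul1r natrM.
Qed.

Lemma minorT_pair n j : (j.*2.+1 <= n)%N ->
  minorT n j.*2.+1 = (j.*2.+1)%:R * minorT n j.*2 /\
  minorT n j.*2.+2 = ((j.*2.+2)%:R - n%:R) * minorT n j.*2.+1.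
Proof.
elim: j => [|j IH] jn.
  rewrite /= minorT_rec minorT1 minorT0 mulr1 mul1n natrB //.
  by split => //; ring.
rewrite doubleS in jn *; have [_ even_step] := IH ltac:(lia).
have odd_step : minorT n j.*2.+3 = (j.*2.+3)%:R * minorT n j.*2.+2.
  rewrite minorT_rec even_step natrM natrB; last lia.
  rewrite !mulrA -!mulrBl; congr (_ * _).
  by rewrite -addn3 -addn2 -addn1 !natrD; ring.
split => //.
rewrite minorT_rec odd_step natrM natrB; last lia.
rewrite mulrA -mulrBl [X in _ = X * _]mulrC; congr (_ * _).
by rewrite (_ : (j.*2.+4 = j.*2.+3 + 1)%N) ?natrD; [ring | lia].
Qed.

Lemma minorT_even n i : (i.*2 <= n.+1)%N ->
  minorT n i.*2 = \prod_(l < i) (((l.*2.+2)%:R - n%:R) * (l.*2.+1)%:R).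
Proof.
elim: i => [|i IH] ilen; first by rewrite big_ord0 minorT0.
rewrite doubleS in ilen *; rewrite big_ord_recr /= -IH; last lia.
have [odd_step even_step] := minorT_pair (n := n) (j := i) ltac:(lia).
by rewrite even_step odd_step; ring.
Qed.

(* For n = 2m+1 the factors 2l+2-n are the negated odd numbers in reverse
   order, so the product is a signed square. *)
Lemma prod_odd_size m :
  \prod_(l < m) (((l.*2.+2)%:R - (m.*2.+1)%:R) * (l.*2.+1)%:R)
  = (-1) ^+ m * (\prod_(l < m) ((l.*2.+1)%:R : rat)) ^+ 2.
Proof.
rewrite big_split /= expr2 mulrA; congr (_ * _).
transitivity (\prod_(l < m) - ((l.*2.+1)%:R : rat)); last by rewrite prodrN card_ord.
rewrite (reindex_inj rev_ord_inj) /=; apply: eq_bigr => l _ /=.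
rewrite (_ : (m.*2.+1 = (m - l.+1).*2.+2 + l.*2.+1)%N); last by have := ltn_ord l; lia.
by rewrite natrD opprD addrA subrr add0r.
Qed.

Lemma oddprod_fact m : (\prod_(l < m) l.*2.+1 * 2 ^ m * m`! = (m.*2)`!)%N.
Proof.
elim: m => [|m IH]; first by rewrite big_ord0.
by rewrite big_ord_recr /= doubleS !factS -IH expnS -!muln2; ring.
Qed.

Lemma oddprod_sq m :
  ((\prod_(l < m) l.*2.+1) ^ 2 * 2 ^ m.*2 = (m.*2)`! * 'C(m.*2, m))%N.
Proof.
set p := (\prod_(l < m) l.*2.+1)%N.
have bin := @bin_fact m.*2 m ltac:(lia).
rewrite (_ : (m.*2 - m = m)%N) in bin; last lia.
have dfact := oddprod_fact m; rewrite -/p in dfact.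
apply/eqP; rewrite -(eqn_pmul2r (_ : 0 < m`! * m`!)%N); last by rewrite muln_gt0 !fact_gt0.
by rewrite -[X in _ == X]mulnA bin -{1}dfact -dfact -muln2 expnM; apply/eqP; ring.
Qed.

Lemma det_Tmat_even j : \det (Tmat j.*2.+2) = 0.
Proof.
rewrite Tmat_leading -/(minorT _ _).
by have [_ ->] := minorT_pair (n := j.*2.+2) (j := j) (leqnSn _); rewrite subrr mul0r.
Qed.

Lemma det_Tmat_odd m :
  \det (Tmat m.*2.+1) =
  (-1) ^+ m * (m.*2.+1)`!%:R / 2 ^+ m.*2 * ('C(m.*2, m))%:R.
Proof.
rewrite Tmat_leading -/(minorT _ _).
have [odd_step _] := minorT_pair (n := m.*2.+1) (j := m) (leqnn _).
rewrite odd_step minorT_even; last lia.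
rewrite prod_odd_size -natr_prod.
have fact_neq0 : ((m.*2)`!%:R : rat) != 0 by rewrite pnatr_eq0 -lt0n fact_gt0.
have pow2_neq0 : (2 ^+ m.*2 : rat) != 0 by rewrite expf_neq0 // pnatr_eq0.
have binE : ('C(m.*2, m)%:R : rat) =
    (\prod_(l < m) l.*2.+1)%:R ^+ 2 * 2 ^+ m.*2 / (m.*2)`!%:R.
  apply: (mulfI fact_neq0); rewrite -natrM -oddprod_sq natrM !natrX.
  by rewrite [RHS]mulrC divfK.
by rewrite binE factS natrM; field; rewrite fact_neq0 pow2_neq0.
Qed.

Theorem mainTheorem4 (n : nat) (hn : (1 <= n)%N) :
  \det (Tmat n) =
  (if odd n then
     ((-1) ^+ ((n - 1) %/ 2) * (n`!)%:R / (2 ^+ (n - 1)) * ('C(n - 1, (n - 1) %/ 2))%:R)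
   else 0).
Proof.
move: hn; have := odd_double_half n; move: (odd n) (n./2) => [] m <- hn /=.
  rewrite add1n det_Tmat_odd.
  have -> : (m.*2.+1 - 1 = m.*2)%N by lia.
  by have -> : (m.*2 %/ 2 = m)%N by lia.
by case: m hn => [|j] //= _; rewrite add0n doubleS det_Tmat_even.
Qed.
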